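(* Let $m$ be a positive integer, let $\mathcal{N}_r$ be the gadget of size $m$, and let $\pi$ be an $\mathcal{H}^{(\ast)}$-partition of $\mathcal{N}_r$. Then either for each $i\in\{0,1,\dots,m\}$ there exists $L_i\in\pi$ such that the Hamiltonian path of $\mathcal{N}_r[L_i]$ is a subsequence of $\swarrow_r^{i}=(r_{i,0},r_{i,1},\dots,r_{i,m})$, or for each $i\in\{0,1,\dots,m\}$ there exists $R_i\in\pi$ such that the Hamiltonian path of $\mathcal{N}_r[R_i]$ is a subsequence of $\searrow_r^{i}=(r_{0,i},r_{1,i},\dots,r_{m,i})$.
   Context: The gadget $\mathcal{N}_r=\langle\mathcal{V}_r,\mathcal{E}_r\rangle$ of size $m$ has vertex set $\mathcal{V}_r=\{r_{i,j}:0\le i,j\le m\}$ and arc set $\mathcal{E}_r=\swarrow_r\cup\searrow_r$, where $\swarrow_r=\{\langle r_{i,j},r_{i,j+1}\rangle:0\le i\le m,\ 0\le j<m\}$ and $\searrow_r=\{\langle r_{i,j},r_{i+1,j}\rangle:0\le i<m,\ 0\le j\le m\}$; it is a DAG. For a digraph $G$ and a subset $V_1$ of its vertices, $G[V_1]$ is the induced subgraph. A partition $\pi$ of the vertex set of a DAG $G$ is an $\mathcal{H}^{(\ast)}$-partition if every induced subgraph $G[P]$, $P\in\pi$, has a directed Hamiltonian path (unique in a DAG) and the quotient digraph $G/\pi$ (vertex set $\pi$, arc $\langle P,Q\rangle$ for $P\ne Q$ whenever some arc of $G$ goes from $P$ to $Q$) is acyclic. *)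

From mathcomp Require Import all_boot.
Set Implicit Arguments. Unset Strict Implicit. Unset Printing Implicit Defensive.

(* Vertex r_{i,j} of the gadget N_r of size m is the pair (i, j),
   0 <= i, j <= m. *)
Definition gvert (m : nat) : finType := ('I_m.+1 * 'I_m.+1)%type.

Definition sw_arc (m : nat) : rel (gvert m) :=
  fun x y => (x.1 == y.1) && (val y.2 == (val x.2).+1).
Definition se_arc (m : nat) : rel (gvert m) :=
  fun x y => (x.2 == y.2) && (val y.1 == (val x.1).+1).
Definition garc (m : nat) : rel (gvert m) :=
  fun x y => sw_arc x y || se_arc x y.

(* s is a directed Hamiltonian path of the induced subgraph G[P]:
   it lists every vertex of P exactly once and consecutive vertices
   are joined by an arc of G (arcs of G[P] are the arcs of G between
   vertices of P). *)
Definition ham_path (T : finType) (e : rel T) (P : {set T}) (s : seq T) :=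
  [/\ uniq s, (forall x, (x \in s) = (x \in P)) & sorted e s].

Definition quot_arc (T : finType) (e : rel T) (pi : {set {set T}}) :
    rel {set T} :=
  fun P Q => [&& P \in pi, Q \in pi, P != Q &
              [exists x in P, exists y in Q, e x y]].

Definition acyclic_rel (T : eqType) (r : rel T) :=
  forall s : seq T, s != [::] -> ~~ cycle r s.

Definition Hstar_partition (T : finType) (e : rel T) (pi : {set {set T}}) :=
  [/\ partition pi [set: T],
      (forall P, P \in pi -> exists s, ham_path e P s)
    & acyclic_rel (quot_arc e pi)].

Definition sw_seq (m : nat) (i : 'I_m.+1) : seq (gvert m) :=
  [seq ((i, j) : gvert m) | j <- enum 'I_m.+1].
Definition se_seq (m : nat) (i : 'I_m.+1) : seq (gvert m) :=
  [seq ((j, i) : gvert m) | j <- enum 'I_m.+1].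

From mathcomp Require Import all_boot.
From mathcomp Require Import zify.
From Stdlib Require Import Classical.
Set Implicit Arguments. Unset Strict Implicit. Unset Printing Implicit Defensive.

(* Every arc of the gadget raises i + j by one, so the Hamiltonian path of a
   block visits each antidiagonal at most once.  If such a path turned, going
   x -> y -> z with one horizontal and one vertical arc, the opposite corner w
   of the unit square x y z w would lie on the antidiagonal of y, hence in
   another block C; the arcs x -> w -> z then give arcs P -> C -> P in the
   quotient, a 2-cycle.  So every block is a segment of a row or of a column.
   If some row i0 contains no row block, then the block of (i0, j) is a column
   segment for every j, i.e. lies in column j. *)

Section SortedSeq.

Variable T : eqType.

Lemma sorted_key_inj (f : T -> nat) (s : seq T) :
  sorted (relpre f ltn) s -> {in s &, injective f}.
Proof.
rewrite sorted_pairwise; last by move=> b a c /=; apply: ltn_trans.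
elim: s => //= a t IH /andP[/allP lt_a /IH inj_t] x y.
rewrite !inE => /orP[/eqP->|xt] /orP[/eqP->|yt] // fxy.
- by have := lt_a _ yt; rewrite /= fxy ltnn.
- by have := lt_a _ xt; rewrite /= fxy ltnn.
- exact: inj_t.
Qed.

Lemma subseq_sorted_key (f : T -> nat) (s t : seq T) :
  sorted (relpre f ltn) s -> sorted (relpre f ltn) t -> {subset s <= t} ->
  subseq s t.
Proof.
move=> s_sorted t_sorted sub_st.
have ltn_tr : transitive (relpre f ltn) by move=> b a c /=; apply: ltn_trans.
have ltn_irr : irreflexive (relpre f ltn) by move=> a /=; rewrite ltnn.
apply/subseq_uniqP; first exact: sorted_uniq t_sorted.
apply: (irr_sorted_eq ltn_tr ltn_irr s_sorted); first exact: sorted_filter.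
by move=> v; rewrite mem_filter; case vs: (v \in s); rewrite //= sub_st.
Qed.

Lemma sorted_key_const (U : eqType) (f : T -> U) (r : rel T) (s : seq T) :
  (forall a b, r a b -> f a = f b) -> sorted r s ->
  {in s &, forall a b, f a = f b}.
Proof.
move=> r_f; case: s => //= x t x_t.
suff f_x : {in x :: t, forall v, f v = f x} by move=> a b /f_x-> /f_x->.
elim: t x x_t => [|y t IH] x /=; first by move=> _ v; rewrite inE => /eqP->.
case/andP=> /r_f f_xy /IH f_y v; rewrite inE => /orP[/eqP-> //|v_t].
by rewrite f_y ?inE ?v_t ?orbT.
Qed.

Variables (P : pred T) (r1 r2 : rel T).
Hypothesis no_switch : {in P & &, forall a b c, r1 a b -> r2 b c -> False}.

Lemma path_relU_no_switch x y s : {subset x :: y :: s <= P} ->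
  r1 x y -> path (relU r1 r2) y s -> path r1 x (y :: s).
Proof.
elim: s x y => [|z s IH] x y sub_P xy /=; first by rewrite xy.
case/andP=> /orP[yz|yz] zs.
- rewrite xy; apply: IH yz zs => v v_in; apply: sub_P.
  by rewrite inE v_in orbT.
- by case: (no_switch _ _ _ xy yz); apply: sub_P; rewrite !inE eqxx ?orbT.
Qed.

End SortedSeq.

Lemma sorted_relU_straight (T : eqType) (P : pred T) (r1 r2 : rel T) s :
  {in P & &, forall a b c, r1 a b -> r2 b c -> False} ->
  {in P & &, forall a b c, r2 a b -> r1 b c -> False} ->
  {subset s <= P} -> sorted (relU r1 r2) s -> sorted r1 s \/ sorted r2 s.
Proof.
move=> no12 no21; case: s => [|x [|y s]] //=; try by left.
move=> sub_P /andP[/orP[xy|xy] ys].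
- by left; apply: (path_relU_no_switch no12 sub_P xy).
- right; apply: (path_relU_no_switch no21 sub_P xy).
  by apply: sub_path ys => a b /=; rewrite orbC.
Qed.

Section HstarPartition.

Variables (T : finType) (e : rel T) (pi : {set {set T}}).
Hypothesis pi_Hstar : Hstar_partition e pi.

Lemma Hstar_block_of w : exists2 C, C \in pi & w \in C.
Proof.
case: pi_Hstar => /and3P[/eqP cover_pi _ _] _ _.
have /bigcupP[C C_pi wC] : w \in cover pi by rewrite cover_pi inE.
by exists C.
Qed.

Lemma Hstar_no_detour P x w z : P \in pi -> x \in P -> z \in P -> w \notin P ->
  e x w -> e w z -> False.
Proof.
case: pi_Hstar => _ _ acyclic_pi P_pi xP zP wNP xw wz.
have [C C_pi wC] := Hstar_block_of w.
have PC : P != C by apply: contraNneq wNP => ->.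
have arc_PC : [exists a in P, exists b in C, e a b].
  by apply/existsP; exists x; rewrite xP; apply/existsP; exists w; rewrite wC.
have arc_CP : [exists a in C, exists b in P, e a b].
  by apply/existsP; exists w; rewrite wC; apply/existsP; exists z; rewrite zP.
have := acyclic_pi [:: P; C] isT.
by rewrite /= /quot_arc P_pi C_pi PC eq_sym PC arc_PC arc_CP.
Qed.

Lemma Hstar_block_key_inj (f : T -> nat) P :
  (forall x y, e x y -> f y = (f x).+1) -> P \in pi -> {in P &, injective f}.
Proof.
case: pi_Hstar => _ ham_pi _ e_f /ham_pi[s [_ mem_s s_sorted]] x y.
rewrite -!mem_s; apply: sorted_key_inj.
by apply: sub_sorted s_sorted => a b /e_f /= ->.
Qed.

End HstarPartition.

Section Gadget.

Variable m : nat.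
Implicit Types (x y z w : gvert m) (s : seq (gvert m)).

Definition antidiag x : nat := val x.1 + val x.2.

Lemma garc_antidiag x y : garc x y -> antidiag y = (antidiag x).+1.
Proof.
by rewrite /antidiag => /orP[] /andP[/eqP-> /eqP->]; lia.
Qed.

Lemma sw_arc_fst x y : sw_arc x y -> x.1 = y.1.
Proof. by case/andP=> /eqP. Qed.

Lemma se_arc_snd x y : se_arc x y -> x.2 = y.2.
Proof. by case/andP=> /eqP. Qed.

Lemma sw_arc_snd_lt x y : sw_arc x y -> val x.2 < val y.2.
Proof. by case/andP=> _ /eqP->. Qed.

Lemma se_arc_fst_lt x y : se_arc x y -> val x.1 < val y.1.
Proof. by case/andP=> _ /eqP->. Qed.

Lemma mem_sw_seq v (i : 'I_m.+1) : (v \in sw_seq i) = (v.1 == i).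
Proof.
case: v => a b; apply/mapP/eqP => [[j _ [-> _]] //|/= ->].
by exists b; rewrite ?mem_enum.
Qed.

Lemma mem_se_seq v (i : 'I_m.+1) : (v \in se_seq i) = (v.2 == i).
Proof.
case: v => a b; apply/mapP/eqP => [[j _ [_ ->]] //|/= ->].
by exists a; rewrite ?mem_enum.
Qed.

Lemma enum_ord_sorted n : sorted (relpre val ltn) (enum 'I_n).
Proof. by rewrite -sorted_map val_enum_ord iota_ltn_sorted. Qed.

Lemma sorted_sw_subseq s v : sorted (@sw_arc m) s -> v \in s ->
  subseq s (sw_seq v.1).
Proof.
move=> s_sorted vs; apply: (@subseq_sorted_key _ (fun u => val u.2)).
- by apply: sub_sorted s_sorted => a b /sw_arc_snd_lt.
- by rewrite sorted_map; apply: sub_sorted (enum_ord_sorted m.+1).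
- move=> u us; rewrite mem_sw_seq.
  by rewrite (sorted_key_const sw_arc_fst s_sorted us vs).
Qed.

Lemma sorted_se_subseq s v : sorted (@se_arc m) s -> v \in s ->
  subseq s (se_seq v.2).
Proof.
move=> s_sorted vs; apply: (@subseq_sorted_key _ (fun u => val u.1)).
- by apply: sub_sorted s_sorted => a b /se_arc_fst_lt.
- by rewrite sorted_map; apply: sub_sorted (enum_ord_sorted m.+1).
- move=> u us; rewrite mem_se_seq.
  by rewrite (sorted_key_const se_arc_snd s_sorted us vs).
Qed.

Variable pi : {set {set gvert m}}.
Hypothesis pi_Hstar : Hstar_partition (@garc m) pi.

Lemma block_no_turn P x y z w : P \in pi -> x \in P -> y \in P -> z \in P ->
  w != y -> garc x y -> garc x w -> garc w z -> False.
Proof.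
move=> P_pi xP yP zP wNy xy xw wz.
apply: (Hstar_no_detour pi_Hstar P_pi xP zP _ xw wz).
apply: contra wNy => wP; apply/eqP.
apply: (Hstar_block_key_inj pi_Hstar garc_antidiag P_pi wP yP).
by rewrite (garc_antidiag xy) (garc_antidiag xw).
Qed.

Lemma block_path_straight P s : P \in pi -> ham_path (@garc m) P s ->
  sorted (@sw_arc m) s \/ sorted (@se_arc m) s.
Proof.
move=> P_pi [_ mem_s s_sorted].
apply: (sorted_relU_straight (P := mem P)) s_sorted => [x y z xP yP zP||v].
- move=> /andP[/eqP x1 /eqP y2] /andP[/eqP y2z /eqP z1].
  apply: (block_no_turn P_pi xP yP zP (w := (z.1, x.2))).
  + by apply/eqP=> /(congr1 fst) /= zy; move: z1; rewrite zy; apply: n_Sn.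
  + by rewrite /garc /sw_arc x1 y2 !eqxx.
  + by rewrite /garc /se_arc /= z1 x1 !eqxx orbT.
  + by rewrite /garc /sw_arc /= -y2z y2 !eqxx.
- move=> x y z xP yP zP /andP[/eqP x2 /eqP y1] /andP[/eqP y1z /eqP z2].
  apply: (block_no_turn P_pi xP yP zP (w := (x.1, z.2))).
  + by apply/eqP=> /(congr1 snd) /= zy; move: z2; rewrite zy; apply: n_Sn.
  + by rewrite /garc /se_arc x2 y1 !eqxx orbT.
  + by rewrite /garc /sw_arc /= z2 x2 !eqxx.
  + by rewrite /garc /se_arc /= -y1z y1 !eqxx orbT.
- by rewrite mem_s.
Qed.

End Gadget.

Theorem lemma5p3 (m : nat) (hm : 0 < m) (pi : {set {set gvert m}}) :
  Hstar_partition (@garc m) pi ->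
  (forall i : 'I_m.+1, exists2 L, L \in pi &
     exists s, ham_path (@garc m) L s /\ subseq s (sw_seq i)) \/
  (forall i : 'I_m.+1, exists2 R, R \in pi &
     exists s, ham_path (@garc m) R s /\ subseq s (se_seq i)).
Proof.
move=> pi_Hstar.
case: (classic (forall i : 'I_m.+1, exists2 L, L \in pi &
     exists s, ham_path (@garc m) L s /\ subseq s (sw_seq i))); first by left.
move=> /not_all_ex_not[i0 no_row_i0]; right=> j.
have [C C_pi vC] := Hstar_block_of pi_Hstar ((i0, j) : gvert m).
have [_ /(_ C C_pi)[s ham_s] _] := pi_Hstar.
have vs : ((i0, j) : gvert m) \in s by case: ham_s => _ ->.
exists C => //; exists s; split=> //.
case: (block_path_straight pi_Hstar C_pi ham_s) => [sw_s|se_s].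
- by case: no_row_i0; exists C => //; exists s; split=> //;
    apply: sorted_sw_subseq sw_s vs.
- exact: sorted_se_subseq se_s vs.
Qed.
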